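(* For each $n\ge 3$, let $\mathcal D_n$ be the algebra with carrier $\{0,1,\dots,n\}$, constant $0$, and operation defined by: $x\cdot y=\max\{x-y,0\}$ for $x,y\in\{0,\dots,n-1\}$; $n\cdot 0=n$; $n\cdot k=n-k-1$ for $k\in\{1,\dots,n-2\}$; $n\cdot(n-1)=1$; and $k\cdot n=0$ for all $k\in\{0,1,\dots,n\}$. Then $\mathcal D_n$ is a BCK-algebra, and it is not commutative (indeed $(n-1)\wedge n=n-2\neq n-1=n\wedge(n-1)$).
   Context: A BCK-algebra is a set $A$ with a binary operation $\cdot$ and a constant $0$ such that for all $x,y,z\in A$: (BCK1) $((x\cdot y)\cdot(x\cdot z))\cdot(z\cdot y)=0$; (BCK2) $(x\cdot(x\cdot y))\cdot y=0$; (BCK3) $x\cdot x=0$; (BCK4) $0\cdot x=0$; (BCK5) $x\cdot y=0$ and $y\cdot x=0$ imply $x=y$. Define $x\wedge y:=y\cdot(y\cdot x)$; the algebra is commutative if $x\wedge y=y\wedge x$ for all $x,y$. *)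

From mathcomp Require Import all_boot.
Set Implicit Arguments. Unset Strict Implicit. Unset Printing Implicit Defensive.

Definition is_BCK (A : Type) (mul : A -> A -> A) (z : A) : Prop :=
  (forall x y w : A, mul (mul (mul x y) (mul x w)) (mul w y) = z) /\
  (forall x y : A, mul (mul x (mul x y)) y = z) /\
  (forall x : A, mul x x = z) /\
  (forall x : A, mul z x = z) /\
  (forall x y : A, mul x y = z -> mul y x = z -> x = y).

Definition bck_meet (A : Type) (mul : A -> A -> A) (x y : A) : A := mul y (mul y x).

Definition is_commutative_BCK (A : Type) (mul : A -> A -> A) : Prop :=
  forall x y : A, bck_meet mul x y = bck_meet mul y x.

Definition Dn_nat (n x y : nat) : nat :=
  if y == n then 0
  else if x < n then x - y
  else if y == 0 then n
  else if y == n.-1 then 1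
  else n - y - 1.

(* The algebra D_n with carrier 'I_n.+1 = {0,...,n}; the value of x . y is
   Dn_nat n x y, truncated into 'I_n.+1 (truncation is a no-op for n >= 1). *)

Definition Dn_op (n : nat) (x y : 'I_n.+1) : 'I_n.+1 :=
  inord (Dn_nat n (val x) (val y)).

Definition Dn_zero (n : nat) : 'I_n.+1 := ord0.

From mathcomp Require Import all_boot zify.

(* Comparing the clauses of the operation shows that x . y = 0 exactly when
   x <= y, so the BCK order of D_n is the usual order of {0,...,n}.  This turns
   (BCK3)-(BCK5) into reflexivity, minimality of 0 and antisymmetry of <=, and
   (BCK1), (BCK2) into the inequalities (x.y).(x.w) <= w.y and x.(x.y) <= y,
   which are checked clause by clause.  Non-commutativity is the computation
   (n-1) /\ n = n.(n.(n-1)) = n.1 = n-2 against n /\ (n-1) = (n-1).0 = n-1. *)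

Variant Dn_nat_spec (n x y : nat) : nat -> Prop :=
  | DnNatTopR of y = n : Dn_nat_spec n x y 0
  | DnNatLow of y != n & x < n : Dn_nat_spec n x y (x - y)
  | DnNatTop0 of y != n & n <= x & y = 0 : Dn_nat_spec n x y n
  | DnNatTopPred of y != n & n <= x & 0 < y & y = n.-1 : Dn_nat_spec n x y 1
  | DnNatTopMid of y != n & n <= x & 0 < y & y != n.-1 :
      Dn_nat_spec n x y (n - y - 1).

Lemma Dn_natP n x y : Dn_nat_spec n x y (Dn_nat n x y).
Proof.
rewrite /Dn_nat; case: eqP => [|/eqP y_neq_n]; first exact: DnNatTopR.
case: ltnP => [|n_le_x]; first exact: DnNatLow.
case: posnP => [|y_gt0]; first exact: DnNatTop0.
by case: eqP => [|/eqP]; [apply: DnNatTopPred | apply: DnNatTopMid].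
Qed.

Section DnNat.
Variable n : nat.

Lemma Dn_nat_le x y : 0 < n -> Dn_nat n x y <= n.
Proof. by case: Dn_natP; lia. Qed.

Lemma Dn_nat_eq0 x y : x <= n -> y <= n -> (Dn_nat n x y == 0) = (x <= y).
Proof. by case: Dn_natP; lia. Qed.

Lemma Dn_nat_BCK1 x y w : x <= n -> y <= n -> w <= n ->
  Dn_nat n (Dn_nat n x y) (Dn_nat n x w) <= Dn_nat n w y.
Proof.
move=> *; case: (Dn_natP n x y) => *; case: (Dn_natP n x w) => *;
  case: (Dn_natP n w y) => *; try by exfalso; lia.
all: by case: Dn_natP; lia.
Qed.

Lemma Dn_nat_BCK2 x y : x <= n -> y <= n -> Dn_nat n x (Dn_nat n x y) <= y.
Proof. by move=> *; case: (Dn_natP n x y); case: Dn_natP; lia. Qed.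

End DnNat.

Section DnOp.
Variable n : nat.
Hypothesis n_gt0 : 0 < n.

Lemma val_Dn_op (x y : 'I_n.+1) : val (Dn_op x y) = Dn_nat n x y.
Proof. by apply: inordK; rewrite ltnS Dn_nat_le. Qed.

Lemma Dn_op_eq0 (x y : 'I_n.+1) : (Dn_op x y == Dn_zero n) = (x <= y).
Proof. by rewrite -val_eqE val_Dn_op Dn_nat_eq0 // -ltnS. Qed.

Lemma Dn_is_BCK : is_BCK (@Dn_op n) (Dn_zero n).
Proof.
have leq_ord (x : 'I_n.+1) : x <= n by rewrite -ltnS.
split; [|split; [|split; [|split]]] => [x y w|x y|x|x|x y].
- by apply/eqP; rewrite Dn_op_eq0 !val_Dn_op Dn_nat_BCK1.
- by apply/eqP; rewrite Dn_op_eq0 !val_Dn_op Dn_nat_BCK2.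
- by apply/eqP; rewrite Dn_op_eq0.
- by apply/eqP; rewrite Dn_op_eq0.
- move=> /eqP; rewrite Dn_op_eq0 => x_le_y /eqP; rewrite Dn_op_eq0 => y_le_x.
  by apply/val_inj/anti_leq/andP.
Qed.

End DnOp.

Section DnMeet.
Variable n : nat.
Hypothesis n_ge3 : 3 <= n.

Let val_top : val (inord n : 'I_n.+1) = n.
Proof. exact: inordK. Qed.

Let val_pred : val (inord n.-1 : 'I_n.+1) = n.-1.
Proof. by apply: inordK; lia. Qed.

Lemma Dn_meet_pred_top : val (bck_meet (@Dn_op n) (inord n.-1) (inord n)) = n - 2.
Proof.
rewrite /bck_meet !val_Dn_op ?val_top ?val_pred; try lia.
by case: Dn_natP; case: Dn_natP; lia.
Qed.

Lemma Dn_meet_top_pred : val (bck_meet (@Dn_op n) (inord n) (inord n.-1)) = n.-1.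
Proof.
rewrite /bck_meet !val_Dn_op ?val_top ?val_pred; try lia.
by case: Dn_natP; case: Dn_natP; lia.
Qed.

End DnMeet.

Theorem mainTheorem6 (n : nat) (Hn : 3 <= n) :
  is_BCK (@Dn_op n) (Dn_zero n) /\
  ~ is_commutative_BCK (@Dn_op n) /\
  val (bck_meet (@Dn_op n) (inord n.-1) (inord n)) = n - 2 /\
  val (bck_meet (@Dn_op n) (inord n) (inord n.-1)) = n.-1 /\
  n - 2 <> n.-1.
Proof.
have meet_pred_top := Dn_meet_pred_top n Hn.
have meet_top_pred := Dn_meet_top_pred n Hn.
split; first by apply: Dn_is_BCK; lia.
split; last by split=> //; split=> //; lia.
by move=> /(_ (inord n.-1) (inord n)) /(congr1 val); lia.
Qed.
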